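(* Let $X$ be a separable Banach space, $\mu_{\mathrm{prior}}$ a Borel probability measure on $X$, $\mathcal L^\dagger:X\to\mathbb R^d$ measurable, $\Phi^{\dagger,y}(\bar u)=-\log\rho(y-\mathcal L^\dagger(\bar u))$, $Z^\dagger(y)=\int_Xe^{-\Phi^{\dagger,y}}d\mu_{\mathrm{prior}}$ and $\frac{d\mu^y}{d\mu_{\mathrm{prior}}}=Z^\dagger(y)^{-1}e^{-\Phi^{\dagger,y}}$. Then $$Z^\dagger(y)\ge\exp\Big(-\int_X\Phi^{\dagger,y}d\mu_{\mathrm{prior}}\Big),\qquad \frac{d\mu^y}{d\mu_{\mathrm{prior}}}(\bar u)\le\exp\Big(\int_X\Phi^{\dagger,y}d\mu_{\mathrm{prior}}-\operatorname*{ess\,inf}_{u\in X}\Phi^{\dagger,y}(u)\Big)\ \ \forall\bar u.$$ In particular, if $\rho$ satisfies (N.1)–(N.3), there is $C>0$ depending only on $\rho$ such that $Z^\dagger(y)\ge C^{-1}\exp(-|y|_\Gamma^2-\|\mathcal L^\dagger\|_{L^2(\mu_{\mathrm{prior}})}^2)$ and $\frac{d\mu^y}{d\mu_{\mathrm{prior}}}(\bar u)\le C\exp(|y|_\Gamma^2+\|\mathcal L^\dagger\|_{L^2(\mu_{\mathrm{prior}})}^2)$ for all $\bar u\in X$.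
   Context: $\|\mathcal L^\dagger\|_{L^2(\mu_{\mathrm{prior}})}=(\int_X|\mathcal L^\dagger(\bar u)|_\Gamma^2\mu_{\mathrm{prior}}(d\bar u))^{1/2}$, $|y|_\Gamma=\langle y,\Gamma^{-1}y\rangle^{1/2}$ for a fixed symmetric positive definite $\Gamma$. $\rho>0$ is a probability density on $\mathbb R^d$; (N.1) $\rho$ is Lipschitz w.r.t. $|\cdot|_\Gamma$; (N.2) $\sup\rho<\infty$; (N.3) $\rho(y)\ge C^{-1}e^{-|y|_\Gamma^2/2}$. *)

From HB Require Import structures.
From mathcomp Require Import all_boot all_order all_algebra.
From mathcomp Require Import all_classical all_reals all_analysis ess_sup_inf.
Set Implicit Arguments. Unset Strict Implicit. Unset Printing Implicit Defensive.
Import Order.TTheory GRing.Theory Num.Theory.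
Import numFieldNormedType.Exports.
Local Open Scope classical_set_scope.
Local Open Scope ring_scope.

Definition spd_mx {R : realType} {d : nat} (G : 'M[R]_d) : Prop :=
  G^T = G /\ (forall v : 'rV[R]_d, v != 0 -> 0 < (v *m G *m v^T) 0 0).

Definition normG2 {R : realType} {d : nat} (G : 'M[R]_d) (y : 'rV[R]_d) : R :=
  (y *m invmx G *m y^T) 0 0.
Definition normG {R : realType} {d : nat} (G : 'M[R]_d) (y : 'rV[R]_d) : R :=
  Num.sqrt (normG2 G y).

Definition borel_rV {R : realType} {d : nat} (A : set 'rV[R]_d) : Prop :=
  <<s open >> A.

Definition borel_fun_rV {R : realType} {d : nat} (f : 'rV[R]_d -> R) : Prop :=
  forall B : set R, measurable B -> borel_rV (f @^-1` B).

(** Lebesgue integral over R^d of a nonnegative function, written as the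
    iterated one-dimensional Lebesgue integral (equal to the integral w.r.t.
    d-dimensional Lebesgue measure for nonnegative Borel f by Tonelli). *)
Fixpoint leb_int_rV {R : realType} (n : nat) : ('rV[R]_n -> \bar R) -> \bar R :=
  match n return ('rV[R]_n -> \bar R) -> \bar R with
  | 0 => fun f => f 0
  | n'.+1 => fun f =>
      (\int[@lebesgue_measure R]_(x in [set: R])
         leb_int_rV (fun v : 'rV[R]_n' => f (row_mx (const_mx x : 'rV[R]_1) v)))%E
  end.

Definition prob_density {R : realType} {d : nat} (rho : 'rV[R]_d -> R) : Prop :=
  borel_fun_rV rho /\ (forall y, 0 <= rho y) /\
  leb_int_rV (fun y => (rho y)%:E) = 1%E.

Definition cond_N1 {R : realType} {d : nat} (G : 'M[R]_d) (rho : 'rV[R]_d -> R) :=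
  exists K : R, forall x z, `|rho x - rho z| <= K * normG G (x - z).
Definition cond_N2 {R : realType} {d : nat} (rho : 'rV[R]_d -> R) :=
  exists M : R, forall y, rho y <= M.
Definition cond_N3 {R : realType} {d : nat} (G : 'M[R]_d) (rho : 'rV[R]_d -> R) :=
  exists C : R, 0 < C /\ forall y, C^-1 * expR (- (normG2 G y / 2)) <= rho y.

(** Measurability of L : X -> R^d (each coordinate is measurable, i.e.
    measurability for the product = Borel sigma-algebra of R^d). *)
Definition meas_rV {dX} {X : measurableType dX} {R : realType} {d : nat}
  (L : X -> 'rV[R]_d) : Prop :=
  forall i : 'I_d, measurable_fun [set: X] (fun u => L u 0 i).

Definition Phi {X : Type} {R : realType} {d : nat} (rho : 'rV[R]_d -> R)
  (L : X -> 'rV[R]_d) (y : 'rV[R]_d) (u : X) : R :=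
  - ln (rho (y - L u)).

Definition Zdag {dX} {X : measurableType dX} {R : realType} {d : nat}
  (mu : probability X R) (rho : 'rV[R]_d -> R) (L : X -> 'rV[R]_d)
  (y : 'rV[R]_d) : \bar R :=
  (\int[mu]_(u in [set: X]) (expR (- Phi rho L y u))%:E)%E.

Definition post_density {dX} {X : measurableType dX} {R : realType} {d : nat}
  (mu : probability X R) (rho : 'rV[R]_d -> R) (L : X -> 'rV[R]_d)
  (y : 'rV[R]_d) (u : X) : R :=
  expR (- Phi rho L y u) / fine (Zdag mu rho L y).

Definition int_Phi {dX} {X : measurableType dX} {R : realType} {d : nat}
  (mu : probability X R) (rho : 'rV[R]_d -> R) (L : X -> 'rV[R]_d)
  (y : 'rV[R]_d) : \bar R :=
  (\int[mu]_(u in [set: X]) (Phi rho L y u)%:E)%E.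

Definition L2norm2 {dX} {X : measurableType dX} {R : realType} {d : nat}
  (mu : probability X R) (G : 'M[R]_d) (L : X -> 'rV[R]_d) : \bar R :=
  (\int[mu]_(u in [set: X]) (normG2 G (L u))%:E)%E.

(** Since [expR (- _)] is convex and [mu] is a probability, Jensen's inequality
    gives [Z >= exp (- int Phi)]; as the posterior density is [exp (- Phi) / Z]
    and [Phi >= ess_inf Phi] almost everywhere, the density bound follows.
    Under (N.3), the inequality [|y - x|^2 <= 2|y|^2 + 2|x|^2] yields
    [exp (- Phi u) = rho (y - L u) >= C^-1 exp (- |y|^2) exp (- |L u|^2)], and
    Jensen's inequality applied to [|L u|^2] bounds [Z] from below; with
    [rho <= M] from (N.2) the density is at most [M / Z]. *)

From HB Require Import structures.
From mathcomp Require Import all_boot all_order all_algebra.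
From mathcomp Require Import all_classical all_reals all_analysis ess_sup_inf.
From mathcomp Require Import lra ring measurable_realfun.
Set Implicit Arguments. Unset Strict Implicit. Unset Printing Implicit Defensive.
Import Order.TTheory GRing.Theory Num.Theory.
Import numFieldNormedType.Exports.
Local Open Scope classical_set_scope.
Local Open Scope ring_scope.

Section SymmetricPositiveDefinite.
Variables (R : realType) (d : nat) (G : 'M[R]_d).
Hypothesis spdG : spd_mx G.

Lemma spd_mx_unit : G \in unitmx.
Proof.
rewrite unitmxE unitfE; apply/negP => /det0P[v v0 vG].
by have := spdG.2 v v0; rewrite vG mul0mx mxE ltxx.
Qed.

Lemma normG2_ge0 (w : 'rV[R]_d) : 0 <= normG2 G w.
Proof.
pose v := w *m invmx G.
have -> : normG2 G w = (v *m G *m v^T) 0 0.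
  by rewrite /v -(mulmxA w) mulVmx ?spd_mx_unit // mulmx1 trmx_mul trmx_inv spdG.1 mulmxA.
have [->|v0] := eqVneq v 0; first by rewrite !mul0mx mxE.
exact/ltW/spdG.2.
Qed.

Let form (a b : 'rV[R]_d) : R := (a *m invmx G *m b^T) 0 0.

Let form_sym (a b : 'rV[R]_d) : form a b = form b a.
Proof.
transitivity ((a *m invmx G *m b^T)^T 0 0); first by rewrite mxE.
by rewrite !trmx_mul trmxK trmx_inv spdG.1 mulmxA.
Qed.

Lemma normG2B_le (a b : 'rV[R]_d) :
  normG2 G (a - b) <= 2 * normG2 G a + 2 * normG2 G b.
Proof.
have entryD (A B : 'M[R]_1) : (A + B) 0 0 = A 0 0 + B 0 0 by rewrite mxE.
have entryN (A : 'M[R]_1) : (- A) 0 0 = - A 0 0 by rewrite mxE.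
have parallelogram :
    normG2 G (a + b) + normG2 G (a - b) = 2 * normG2 G a + 2 * normG2 G b.
  rewrite /normG2 linearD linearB /= !(mulmxDl, mulmxBl, mulmxDr, mulmxBr, mulmxN, mulNmx).
  rewrite !(entryD, entryN) -/(form a b) -/(form b a) form_sym; lra.
by have := normG2_ge0 (a + b); lra.
Qed.
End SymmetricPositiveDefinite.

Section RationalBoxes.
Variables (R : realType) (d : nat).

Definition rat_box (p : 'rV[rat]_d * rat) : set 'rV[R]_d :=
  [set w | forall j, w 0 j \in `](ratr (p.1 0 j) - ratr p.2), (ratr (p.1 0 j) + ratr p.2)[].

Lemma open_bigcup_rat_box (O : set 'rV[R]_d) : open O ->
  O = \bigcup_(p in [set p | rat_box p `<=` O]) rat_box p.
Proof.
move=> oO; apply/seteqP; split => [v Ov|w [p /= + bw]]; last exact.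
have /nbhs_ballP[e e0 ballO] : nbhs v O by apply: open_nbhs_nbhs.
have [r] : exists r : rat, ratr r \in `]0, e / 2[.
  by apply: rat_in_itvoo; rewrite divr_gt0.
rewrite in_itv /= => /andP[r0 re].
(* A box of rational radius [r < e/2] around a rational point [r]-close to [v]
   contains [v] and lies in [ball v e]. *)
have [c vc] : {c : 'I_d -> rat & forall j, `|v 0 j - ratr (c j)| < ratr r}.
  apply: (@choice _ _ (fun j q => `|v 0 j - ratr q| < ratr r)) => j.
  have /rat_in_itvoo[q] : v 0 j - ratr r < v 0 j + ratr r by lra.
  by rewrite in_itv /= => /andP[? ?]; exists q; rewrite ltr_norml; apply/andP; lra.
exists (\row_j c j, r); last first.
  by move=> j /=; rewrite mxE in_itv /=; have := vc j; rewrite ltr_norml => /andP[]; lra.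
move=> w bw; apply: ballO; split => // i j; rewrite (ord1 i) -ball_normE /=.
have := bw j; rewrite mxE in_itv /= => /andP[? ?].
have := vc j; rewrite ltr_norml => /andP[? ?].
rewrite ltr_norml; apply/andP; lra.
Qed.

Variables (dX : measure_display) (X : measurableType dX) (g : X -> 'rV[R]_d).
Hypothesis mg : meas_rV g.

Lemma measurable_preimage_rat_box p : measurable (g @^-1` rat_box p).
Proof.
have -> : g @^-1` rat_box p = \bigcap_(j in [set: 'I_d])
    ([set: X] `&` (fun u => g u 0 j) @^-1` [set` `](ratr (p.1 0 j) - ratr p.2),
                                            (ratr (p.1 0 j) + ratr p.2)[]).
  by apply/seteqP; split => [u bu j _|u bu j] //=; have [] := bu j I.
apply: fin_bigcap_measurable => [|j _]; first exact: finite_finset.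
exact: (mg j) measurableT _ (measurable_itv _).
Qed.

Lemma measurable_preimage_open (O : set 'rV[R]_d) : open O ->
  measurable (g @^-1` O).
Proof.
move=> /open_bigcup_rat_box ->; rewrite preimage_bigcup bigcup_mkcond.
apply: countable_bigcupT_measurable => [|p]; first exact: countableP.
by case: ifP => _; [exact: measurable_preimage_rat_box | exact: measurable0].
Qed.

Lemma measurable_preimage_borel (A : set 'rV[R]_d) : borel_rV A ->
  measurable (g @^-1` A).
Proof.
move=> borelA; suff : [set A | measurable (g @^-1` A)] A by [].
apply: (smallest_sub _ _ borelA) => [|O /measurable_preimage_open//].
split => /= [|B mB|F mF]; first by rewrite preimage_set0.
- by rewrite setTD preimage_setC; apply: measurableC.
- by rewrite preimage_bigcup; apply: bigcupT_measurable.
Qed.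

Lemma measurable_fun_borel_comp (f : 'rV[R]_d -> R) : borel_fun_rV f ->
  measurable_fun [set: X] (fun u => f (g u)).
Proof.
move=> borelf _ B mB; rewrite setTI -[_ @^-1` _]/(g @^-1` (f @^-1` B)).
exact: measurable_preimage_borel (borelf _ mB).
Qed.

End RationalBoxes.

Lemma expRN_tangent_le (R : realType) (m x : R) :
  expR (- m) * (1 + m - x) <= expR (- x).
Proof.
have -> : expR (- x) = expR (- m) * expR (m - x) by rewrite -expRD; congr expR; ring.
by apply: ler_wpM2l; [exact: expR_ge0 | have := expR_ge1Dx (m - x); lra].
Qed.

Section JensenExp.
Local Open Scope ereal_scope.
Variables (dX : measure_display) (X : measurableType dX) (R : realType).
Variables (mu : probability X R) (f : X -> R).
Hypothesis mf : measurable_fun [set: X] f.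

Let mexpRN : measurable_fun [set: X] (fun x => (expR (- f x))%:E).
Proof. by apply/measurable_EFinP; apply: measurableT_comp => //; apply: measurableT_comp. Qed.

Let expRN_ge0 x : 0 <= (expR (- f x))%:E.
Proof. by rewrite lee_fin expR_ge0. Qed.

Lemma integral_funeneg_le_expRN :
  \int[mu]_(x in [set: X]) (EFin \o f)^\- x <= \int[mu]_(x in [set: X]) (expR (- f x))%:E.
Proof.
apply: ge0_le_integral => //; first exact/measurable_funeneg/measurable_EFinP.
move=> x _; rewrite funenegE /= ge_max expRN_ge0 andbT lee_fin.
by have := expR_ge1Dx (- f x); lra.
Qed.

Lemma expeRN_integral_le_integrable : mu.-integrable [set: X] (EFin \o f) ->
  expeR (- \int[mu]_(x in [set: X]) (f x)%:E) <= \int[mu]_(x in [set: X]) (expR (- f x))%:E.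
Proof.
move=> intf.
have [->|] := eqVneq (\int[mu]_(x in [set: X]) (expR (- f x))%:E) +oo; first by rewrite leey.
rewrite -ltey => expRN_fin.
have intexp : mu.-integrable [set: X] (fun x => (expR (- f x))%:E).
  apply/integrableP; split => //.
  by under eq_integral do rewrite gee0_abs ?expRN_ge0//.
pose m := fine (\int[mu]_(x in [set: X]) (f x)%:E).
have Im : \int[mu]_(x in [set: X]) (f x)%:E = m%:E by rewrite fineK ?integrable_fin_num.
(* Integrate the tangent line of [expR (- _)] at the mean [m]. *)
have intc : mu.-integrable [set: X] (EFin \o cst (1 + m)%R).
  exact: finite_measure_integrable_cst.
apply: (@le_trans _ _ (\int[mu]_(x in [set: X])
    ((expR (- m))%:E * ((EFin \o cst (1 + m)%R) x - (EFin \o f) x)))); last first.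
  apply: le_integral => //; first by apply: integrableZl => //; apply: integrableB.
  by move=> x _; rewrite /= -EFinB -EFinM lee_fin expRN_tangent_le.
rewrite integralZl //; last exact: integrableB.
rewrite integralB_EFin //= integral_cst //= probability_setT mule1 Im.
by rewrite -EFinB -EFinM addrK mulr1.
Qed.

Lemma expeRN_integral_le :
  expeR (- \int[mu]_(x in [set: X]) (f x)%:E) <= \int[mu]_(x in [set: X]) (expR (- f x))%:E.
Proof.
have mEf : measurable_fun [set: X] (EFin \o f) by exact/measurable_EFinP.
have [Ifin|] := boolP (\int[mu]_(x in [set: X]) (f x)%:E \is a fin_num).
  apply: expeRN_integral_le_integrable; apply/integrableP; split => //.
  by rewrite integral_fin_num_abs.
rewrite fin_numE negb_and !negbK => /orP[/eqP Ioo|/eqP ->]; last first.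
  by rewrite /= integral_ge0.
suff negoo : \int[mu]_(x in [set: X]) (EFin \o f)^\- x = +oo.
  by have := integral_funeneg_le_expRN; rewrite negoo leye_eq => /eqP ->; rewrite leey.
move: Ioo; rewrite integralE.
have := integral_ge0 mu (fun x _ => funepos_ge0 (EFin \o f) x) (D := [set: X]).
by case: (\int[mu]_(x in _) _^\+ x) => [r||] //; case: (\int[mu]_(x in _) _^\- x).
Qed.

End JensenExp.

Lemma measurable_normG2 (R : realType) (d : nat) (G : 'M[R]_d)
    (dX : measure_display) (X : measurableType dX) (L : X -> 'rV[R]_d) :
  meas_rV L -> measurable_fun [set: X] (fun u => normG2 G (L u)).
Proof.
move=> mL.
have -> : (fun u => normG2 G (L u)) =
    (fun u => \sum_(k <- enum 'I_d) (\sum_(l <- enum 'I_d) L u 0 l * invmx G l k) * L u 0 k).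
  apply: funext => u; rewrite /normG2 mxE big_enum /=; apply: eq_bigr => k _.
  by rewrite !mxE big_enum.
apply: measurable_sum => k; apply: measurable_funM => //.
by apply: measurable_sum => l; apply: measurable_funM.
Qed.

Lemma le_expRN_div (R : realType) (I s : \bar R) (z x : R) : 0 < z ->
  (expeR (- I) <= z%:E)%E -> (s <= x%:E)%E -> ((expR (- x) / z)%:E <= expeR (I - s))%E.
Proof.
move=> z_gt0; case: I => [r| |]; case: s => [t| |] //= Iz sx; rewrite ?leey //.
rewrite !lee_fin in Iz sx *; rewrite ler_pdivrMr //.
apply: (@le_trans _ _ (expR (- t))); first by rewrite ler_expR lerN2.
have -> : expR (- t) = expR (r - t) * expR (- r) by rewrite -expRD; congr expR; ring.
by rewrite ler_wpM2l ?expR_ge0.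
Qed.

Section Posterior.
Variables (R : realType) (d : nat) (rho : 'rV[R]_d -> R).
Hypothesis rho_density : prob_density rho.
Variables (dX : measure_display) (X : measurableType dX).
Variables (mu : probability X R) (L : X -> 'rV[R]_d) (y : 'rV[R]_d).
Hypothesis mL : meas_rV L.

Lemma measurable_rho_residual : measurable_fun [set: X] (fun u => rho (y - L u)).
Proof.
have mres : meas_rV (fun u => y - L u).
  by move=> j; under eq_fun do rewrite !mxE; exact: measurable_funB.
exact (measurable_fun_borel_comp mres rho_density.1).
Qed.

Lemma measurable_Phi : measurable_fun [set: X] (Phi rho L y).
Proof.
by apply: measurableT_comp => //; apply: measurableT_comp => //; exact: measurable_rho_residual.
Qed.

Local Open Scope ereal_scope.

Lemma Zdag_ge_expeRN : expeR (- int_Phi mu rho L y) <= Zdag mu rho L y.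
Proof. exact/expeRN_integral_le/measurable_Phi. Qed.

Lemma post_density_le_ae : Zdag mu rho L y < +oo ->
  {ae mu, forall u, (post_density mu rho L y u)%:E <=
     expeR (int_Phi mu rho L y - ess_inf mu (fun v => (Phi rho L y v)%:E))}.
Proof.
move=> Z_lt_oo.
apply: filterS (ess_inf_le mu (fun v => (Phi rho L y v)%:E)) => u ess_inf_le_Phi.
have := Zdag_ge_expeRN; have : 0 <= Zdag mu rho L y by apply: integral_ge0.
move: Z_lt_oo; rewrite /post_density; case: (Zdag mu rho L y) => // z _.
rewrite lee_fin le_eqVlt => /predU1P[<- _|z_gt0 Zge] /=.
  by rewrite invr0 mulr0 expeR_ge0.
exact: le_expRN_div.
Qed.

End Posterior.

Section GaussianMinorant.
Variables (R : realType) (d : nat) (G : 'M[R]_d) (rho : 'rV[R]_d -> R).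
Hypotheses (spdG : spd_mx G) (rho_density : prob_density rho).
Hypothesis rho_gt0 : forall z, 0 < rho z.
Variables (M C : R).
Hypothesis rho_le : forall z, rho z <= M.
Hypothesis C_gt0 : 0 < C.
Hypothesis rho_ge_gauss : forall z, C^-1 * expR (- (normG2 G z / 2)) <= rho z.

Lemma rho_sub_ge_expR (y x : 'rV[R]_d) :
  C^-1 * expR (- normG2 G y) * expR (- normG2 G x) <= rho (y - x).
Proof.
apply: le_trans (rho_ge_gauss (y - x)).
rewrite -mulrA -expRD ler_wpM2l ?invr_ge0 ?(ltW C_gt0) // ler_expR.
by have := normG2B_le spdG y x; lra.
Qed.

Variables (dX : measure_display) (X : measurableType dX).
Variables (mu : probability X R) (L : X -> 'rV[R]_d) (y : 'rV[R]_d).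
Hypothesis mL : meas_rV L.

Local Open Scope ereal_scope.

Lemma Zdag_ge_gauss :
  (C^-1 * expR (- normG2 G y))%:E * expeR (- L2norm2 mu G L) <= Zdag mu rho L y.
Proof.
have mq := measurable_normG2 G mL.
have expRNq_ge0 u : 0 <= (expR (- normG2 G (L u)))%:E by rewrite lee_fin expR_ge0.
have cst_ge0 : (0 <= C^-1 * expR (- normG2 G y))%R by rewrite mulr_ge0 ?invr_ge0 ?expR_ge0 ?(ltW C_gt0).
apply: (@le_trans _ _ (\int[mu]_(u in [set: X])
    ((C^-1 * expR (- normG2 G y))%:E * (expR (- normG2 G (L u)))%:E))).
  rewrite ge0_integralZl_EFin //; last first.
    by apply/measurable_EFinP; apply: measurableT_comp => //; apply: measurableT_comp.
  by rewrite lee_wpmul2l ?lee_fin //; exact: expeRN_integral_le.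
apply: ge0_le_integral => //.
- by move=> u _; rewrite -EFinM lee_fin mulr_ge0 ?expR_ge0.
- apply/measurable_EFinP; apply: measurable_funM => //.
  by apply: measurableT_comp => //; apply: measurableT_comp.
- apply/measurable_EFinP; do 2 apply: measurableT_comp => //.
  exact (measurable_Phi rho_density y mL).
- by move=> u _; rewrite -EFinM lee_fin /Phi opprK lnK ?posrE // rho_sub_ge_expR.
Qed.

Let K := (C * Num.max 1 M)%R.

Let K_gt0 : (0 < K)%R.
Proof. by rewrite mulr_gt0 // lt_max ltr01. Qed.

Lemma Zdag_lower_bound :
  (K^-1)%:E * expeR (- (normG2 G y)%:E - L2norm2 mu G L) <= Zdag mu rho L y.
Proof.
apply: le_trans Zdag_ge_gauss.
rewrite expeRD -EFinN muleA -EFinM lee_wpmul2r ?expeR_ge0 // lee_fin.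
rewrite ler_wpM2r ?expR_ge0 // lef_pV2 ?posrE //.
by rewrite ler_peMr ?le_max ?lexx // ltW.
Qed.

Lemma post_density_upper_bound (u : X) :
  (post_density mu rho L y u)%:E <= K%:E * expeR ((normG2 G y)%:E + L2norm2 mu G L).
Proof.
have : 0 <= L2norm2 mu G L by apply: integral_ge0 => v _; rewrite lee_fin normG2_ge0.
have := Zdag_ge_gauss; rewrite /post_density /Phi opprK lnK ?posrE //.
case: (L2norm2 mu G L) => [l| |] // Zge l_ge0; last by rewrite /= gt0_muley ?leey ?lte_fin.
case: (Zdag mu rho L y) Zge => [z| |] Zge /=; last 2 first.
- by rewrite invr0 mulr0 -EFinM lee_fin mulr_ge0 ?expR_ge0 ?ltW.
- by rewrite leeNy_eq in Zge.
rewrite -!EFinM !lee_fin -mulrA -expRD -opprD in Zge *.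
have z_gt0 : (0 < z)%R by apply: lt_le_trans Zge; rewrite mulr_gt0 ?invr_gt0 ?expR_gt0.
rewrite ler_pdivrMr //; apply: le_trans (rho_le _) _.
set e := expR _; rewrite expRN -/e in Zge.
have e_gt0 : (0 < e)%R by exact: expR_gt0.
apply: (@le_trans _ _ (K * e * (C^-1 * e^-1))%R); last by rewrite ler_wpM2l // mulr_ge0 // ltW.
have -> : (K * e * (C^-1 * e^-1) = Num.max 1 M)%R by rewrite /K; field; rewrite !gt_eqF.
by rewrite le_max lexx orbT.
Qed.

End GaussianMinorant.

Theorem mainTheorem8 (R : realType) (d : nat) (G : 'M[R]_d)
  (rho : 'rV[R]_d -> R) :
  spd_mx G -> prob_density rho -> (forall z, 0 < rho z) ->
  (* general bounds *)
  (forall (dX : measure_display) (X : measurableType dX)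
          (mu : probability X R) (L : X -> 'rV[R]_d) (y : 'rV[R]_d),
     meas_rV L ->
     (expeR (- int_Phi mu rho L y) <= Zdag mu rho L y)%E /\
     ((Zdag mu rho L y < +oo)%E ->
      {ae mu, forall u, ((post_density mu rho L y u)%:E <=
         expeR (int_Phi mu rho L y
                - ess_inf mu (fun v => (Phi rho L y v)%:E)))%E})) /\
  (* bounds under (N.1)-(N.3) *)
  (cond_N1 G rho -> cond_N2 rho -> cond_N3 G rho ->
   exists C : R, 0 < C /\
   forall (dX : measure_display) (X : measurableType dX)
          (mu : probability X R) (L : X -> 'rV[R]_d) (y : 'rV[R]_d),
     meas_rV L ->
     ((C^-1)%:E * expeR (- (normG2 G y)%:E - L2norm2 mu G L)
        <= Zdag mu rho L y)%E /\
     (forall u : X, ((post_density mu rho L y u)%:E <=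
        C%:E * expeR ((normG2 G y)%:E + L2norm2 mu G L))%E)).
Proof.
move=> spdG rho_density rho_gt0; split.
  move=> dX X mu L y mL; split; first exact: Zdag_ge_expeRN.
  exact: post_density_le_ae.
move=> _ [M rho_le] [C [C_gt0 rho_ge_gauss]].
exists (C * Num.max 1 M); split; first by rewrite mulr_gt0 // lt_max ltr01.
move=> dX X mu L y mL; split.
- exact: Zdag_lower_bound.
- exact: post_density_upper_bound.
Qed.
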